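(* Let $r\ge3$, $\alpha,\beta\in\mathcal S_r$, $\epsilon\in\{\pm1\}^r$, $\sigma=\sigma(\alpha,\beta,\epsilon)$, and let $A\in\mathcal P(r)$ satisfy $0_\sigma\le A$ and $A\vee0_\alpha\vee0_\beta=1_r$. Then $$-2r-\#(\sigma)+2\#(A)+\#(\alpha)+\#(\beta)+1\le0.$$
   Context: $\mathcal P(r)$: set partitions of $[r]$, ordered by refinement, join $\vee$, $1_r$ the one-block partition, $\#(A)$ number of blocks. For a permutation $\pi$, $0_\pi$ is the partition into cycles, $\#(\pi)$ the number of cycles. Index $[2r]$ as $\{1,\dots,r,\bar1,\dots,\bar r\}$; $H_r\subset\mathcal S_{2r}$ is the centralizer of $\gamma=\prod_i(i\ \bar i)$. For $\epsilon\in\{\pm1\}^r$, $\tau_\epsilon=\prod_{i:\epsilon_i=-1}(i\ \bar i)$; for $\pi\in\mathcal S_r$, $t_\pi(i)=i$, $t_\pi(\bar i)=\overline{\pi(i)}$. A pair $(\epsilon,\pi)$ is particular if for every cycle $c$ of $\pi$, $\epsilon_i=1$ at the smallest element $i$ of $c$. Every left coset $gH_r$ contains exactly one $\tau_{\epsilon'}t_\sigma$ with $(\epsilon',\sigma)$ particular; $\sigma(\alpha,\beta,\epsilon)$ denotes the $\sigma$ of the particular pair with $t_{\alpha^{-1}}\tau_\epsilon t_\beta\in\tau_{\epsilon'}t_\sigma H_r$. *)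

From HB Require Import structures.
From mathcomp Require Import all_boot all_order all_algebra all_fingroup.
Set Implicit Arguments. Unset Strict Implicit. Unset Printing Implicit Defensive.

(* [2r] is encoded as 'I_r + 'I_r : inl i = i, inr i = \bar i. *)
Definition T2 (r : nat) : finType := ('I_r + 'I_r)%type.

(* Paper's composition: (pcomp a b) x = a (b x).  (MathComp's a * b applies a first.) *)
Definition pcomp (U : finType) (a b : {perm U}) : {perm U} := (b * a)%g.

(* Signs eps in {+-1}^r are encoded as eps : 'I_r -> bool, with
   eps i = true  <->  eps_i = -1. *)

Definition gamma_fun r (x : T2 r) : T2 r :=
  match x with inl i => inr i | inr i => inl i end.
Lemma gamma_inj r : injective (@gamma_fun r).
Proof. by case=> i; case=> j //= [->]. Qed.
Definition gamma r : {perm T2 r} := perm (@gamma_inj r).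

Definition Hr r : {set {perm T2 r}} :=
  [set g : {perm T2 r} | pcomp g (gamma r) == pcomp (gamma r) g].

Definition tau_fun r (e : 'I_r -> bool) (x : T2 r) : T2 r :=
  match x with
  | inl i => if e i then inr i else inl i
  | inr i => if e i then inl i else inr i
  end.
Lemma tau_inj r e : injective (@tau_fun r e).
Proof.
case=> i; case=> j /=; case Ei: (e i); case Ej: (e j) => //= H; case: H => H;
  by subst; rewrite ?Ei in Ej.
Qed.
Definition tau r (e : 'I_r -> bool) : {perm T2 r} := perm (@tau_inj r e).

Definition t_fun r (p : {perm 'I_r}) (x : T2 r) : T2 r :=
  match x with inl i => inl i | inr i => inr (p i) end.
Lemma t_inj r p : injective (@t_fun r p).
Proof. by case=> i; case=> j //= [] // /perm_inj ->. Qed.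
Definition tperm2 r (p : {perm 'I_r}) : {perm T2 r} := perm (@t_inj r p).

Definition particular r (e : 'I_r -> bool) (p : {perm 'I_r}) : Prop :=
  forall i : 'I_r, (forall j, j \in porbit p i -> (i <= j)%N) -> e i = false.

Definition is_sigma r (a b : {perm 'I_r}) (e : 'I_r -> bool) (s : {perm 'I_r}) : Prop :=
  exists e' : 'I_r -> bool, particular e' s /\
    exists2 h, h \in Hr r &
      pcomp (tperm2 a^-1) (pcomp (tau e) (tperm2 b)) = pcomp (pcomp (tau e') (tperm2 s)) h.

Definition is_setpart r (A : {set {set 'I_r}}) : bool := partition A [set: 'I_r].
Definition refines r (A B : {set {set 'I_r}}) : bool :=
  [forall a in A, [exists b in B, a \subset b]].
Definition pjoin r (A B : {set {set 'I_r}}) : {set {set 'I_r}} :=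
  equivalence_partition
    (connect (fun x y => (pblock A x == pblock A y) || (pblock B x == pblock B y)))
    [set: 'I_r].
Definition one_part r : {set {set 'I_r}} := [set [set: 'I_r]].
Definition zero_part r (p : {perm 'I_r}) : {set {set 'I_r}} := porbits p.

From Pilot Require Import Defs.
From HB Require Import structures.
From mathcomp Require Import all_boot all_order all_algebra all_fingroup zify.
Import GRing.Theory Num.Theory.
Set Implicit Arguments. Unset Strict Implicit. Unset Printing Implicit Defensive.

(* Lift a permutation p of [r] to the 2r points by letting it act as p on the
   first copy of [r] and as p^-1 on the second.  With x the lift of alpha and y
   the tau_eps-conjugate of the lift of beta^-1, the coset condition defining
   sigma makes x * y conjugate to the lift of sigma^-1, so the genus inequality
   for the pair (x, y) gives #(alpha) + #(beta) + #(sigma) <= r + 2c, where c is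
   the number of components of the graph on [r] with edges i - alpha i and
   i - beta i: every component of <x, y> lies over one of them, and at most two
   lie over each.  Adding these edges to 0_sigma <= A and using submodularity of
   the number of components, with A v 0_alpha v 0_beta = 1_r and sigma
   preserving the components, gives #(A) + c <= #(sigma) + 1.  Hence
   2#(A) + #(alpha) + #(beta) <= r + #(sigma) + 2, which is the claim as soon
   as r >= 3. *)

Definition undirected (T : finType) (e : rel T) : rel T := [rel u v | e u v || e v u].
Arguments undirected {T} e _ _ /.
Definition ncomp (T : finType) (e : rel T) := n_comp (undirected e) T.

Definition add_edge (T : finType) (e : rel T) (a b : T) : rel T :=
  [rel u v | e u v || (u == a) && (v == b)].
Arguments add_edge {T} e a b _ _ /.

Definition add_edges (T : finType) (e : rel T) (s : seq (T * T)) : rel T :=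
  [rel u v | e u v || ((u, v) \in s)].
Arguments add_edges {T} e s _ _ /.

Section Components.
Variable T : finType.
Implicit Types (e f g : rel T) (a b u v w x y : T).

Lemma undirected_sym e : connect_sym (undirected e).
Proof. by apply: sym_connect_sym => u v; rewrite /= orbC. Qed.

Lemma connect_undirected1 e u v : e u v -> connect (undirected e) u v.
Proof. by move=> euv; apply: connect1; rewrite /= euv. Qed.

Lemma connect_undirected_sub e f :
  (forall u v, e u v -> connect (undirected f) u v) ->
  subrel (connect (undirected e)) (connect (undirected f)).
Proof.
move=> ef; apply: connect_sub => u v /orP[/ef // | /ef].
by rewrite undirected_sym.
Qed.

Lemma eq_ncomp e f : e =2 f -> ncomp e = ncomp f.
Proof. by move=> ef; apply: eq_n_comp; apply: eq_connect => u v; rewrite /= !ef. Qed.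

Lemma eq_ncomp_sub e f :
  (forall u v, e u v -> connect (undirected f) u v) ->
  (forall u v, f u v -> connect (undirected e) u v) -> ncomp e = ncomp f.
Proof.
move=> ef fe; apply: eq_n_comp => u v.
by apply/idP/idP; apply: connect_undirected_sub.
Qed.

Lemma ncomp_card_imset (S : finType) e (F : T -> S) :
  (forall u v, connect (undirected e) u v = (F u == F v)) -> ncomp e = #|F @: T|.
Proof.
move=> connectF; have se := undirected_sym e.
rewrite /ncomp /n_comp_mem.
have -> : F @: T = F @: [set u | fingraph.roots (undirected e) u].
  apply/setP=> z; apply/imsetP/imsetP=> [[u _ ->] | [u _ ->]]; last by exists u.
  exists (fingraph.root (undirected e) u); first by rewrite inE fingraph.roots_root.
  by apply/eqP; rewrite -connectF connect_root.
rewrite card_in_imset; first by apply: eq_card => u; rewrite !inE andbT.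
move=> u v; rewrite !inE => /eqP ru /eqP rv /eqP; rewrite -connectF.
by move/(fingraph.rootP se); rewrite ru rv.
Qed.

Lemma ncomp_eq1 e : (forall u v, connect (undirected e) u v) -> 0 < #|T| ->
  ncomp e = 1.
Proof.
move=> conn /card_gt0P[u0 _]; rewrite (@ncomp_card_imset _ e (fun=> tt)) => [|u v].
  apply/eqP/cards1P; exists tt; apply/setP=> -[].
  by rewrite in_set1 eqxx; apply/imsetP; exists u0.
by rewrite conn.
Qed.

Lemma connect_add_edge e a b u v :
  let C := closure (undirected e) (pred2 a b) in
  connect (undirected (add_edge e a b)) u v =
    connect (undirected e) u v || (u \in C) && (v \in C).
Proof.
move=> C; have se := undirected_sym e.
have oldC : subrel (connect (undirected e)) (connect (undirected (add_edge e a b))).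
  by apply: connect_undirected_sub => x y exy; apply: connect_undirected1; rewrite /= exy.
have toC x z : connect (undirected e) x z -> pred2 a b z -> x \in C.
  by move=> xz abz; apply/pred0Pn; exists z; rewrite /= !inE xz.
have Ca x : x \in C -> connect (undirected (add_edge e a b)) x a.
  case/pred0Pn=> z /andP[xz /pred2P[] zE]; subst z; first exact: oldC.
  apply: connect_trans (oldC _ _ xz) _; rewrite undirected_sym.
  by apply: connect_undirected1; rewrite /= !eqxx orbT.
apply/idP/idP => [|/orP[/oldC // | /andP[/Ca ua /Ca va]]]; last first.
  by apply: connect_trans ua _; rewrite undirected_sym.
pose Q := [pred z | connect (undirected e) u z || (u \in C) && (z \in C)].
have newE x y : undirected (add_edge e a b) x y ->
    undirected e x y \/ pred2 a b x /\ pred2 a b y.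
  by case/orP=> /orP[exy | /andP[/eqP-> /eqP->]];
    rewrite /= ?exy ?eqxx ?orbT; [left | right | left | right].
have edgeQ x y : undirected (add_edge e a b) x y -> x \in Q -> y \in Q.
  rewrite !inE; move=> /newE[exy | [abx aby]] /orP[ux | /andP[uC xC]].
  - by rewrite (connect_trans ux (connect1 exy)).
  - by rewrite uC -(closure_closed se _ exy) xC orbT.
  - by rewrite (toC u x) // (toC y y) ?orbT.
  - by rewrite uC (toC y y) ?orbT.
by move/(closed_connect (intro_closed (undirected_sym _) edgeQ)); rewrite !inE connect0.
Qed.

Lemma ncomp_add_edge e a b :
  ncomp (add_edge e a b) + ~~ connect (undirected e) a b = ncomp e.
Proof.
have se := undirected_sym e; have se' := undirected_sym (add_edge e a b).
set C := closure (undirected e) (pred2 a b).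
have aC : a \in C by apply: mem_closure; rewrite !inE eqxx.
rewrite /ncomp (n_compC C) [n_comp (undirected e) T](n_compC C) n_comp_closure2 //.
have -> : n_comp (undirected (add_edge e a b)) C = 1.
  rewrite -(n_comp_connect se' a); apply: eq_n_comp_r => u.
  rewrite inE /= connect_add_edge -/C aC /=.
  have [uC | uNC] := boolP (u \in C); first by rewrite orbT.
  rewrite orbF; apply/esym/negbTE; apply: contra uNC => au.
  by apply/pred0Pn; exists a; rewrite /= !inE eqxx -se au.
have -> : n_comp (undirected (add_edge e a b)) [predC C] =
          n_comp (undirected e) [predC C].
  apply: eq_card => u; rewrite !inE; have [uC | uNC] := boolP (u \in C).
    by rewrite !andbF.
  rewrite !andbT /fingraph.roots /fingraph.root.
  rewrite (@eq_pick _ (connect (undirected (add_edge e a b)) u)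
                      (connect (undirected e) u)) //.
  by move=> v; rewrite connect_add_edge (negbTE uNC) orbF.
by rewrite add1n addSn addnC.
Qed.

Lemma add_edges_cons e p s : add_edges e (p :: s) =2 add_edge (add_edges e s) p.1 p.2.
Proof.
by case: p => a b u v; rewrite /= in_cons xpair_eqE -orbA [_ && _ || _]orbC.
Qed.

Lemma ncomp_add_edges_submod e g s :
  subrel (connect (undirected g)) (connect (undirected e)) ->
  ncomp e + ncomp (add_edges g s) <= ncomp g + ncomp (add_edges e s).
Proof.
move=> ge; elim: s => [|[a b] s IH].
  by rewrite !(@eq_ncomp _ _ (fun u v => orbF (_ u v))) addnC.
rewrite !(eq_ncomp (add_edges_cons _ (a, b) s)) /=.
have Hg := ncomp_add_edge (add_edges g s) a b.
have He := ncomp_add_edge (add_edges e s) a b.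
have mono : subrel (connect (undirected (add_edges g s)))
                   (connect (undirected (add_edges e s))).
  apply: connect_undirected_sub => u v /orP[guv | suv].
    apply: connect_undirected_sub (ge _ _ (connect_undirected1 guv)) => x y exy.
    by apply: connect_undirected1; rewrite /= exy.
  by apply: connect_undirected1; rewrite /= suv orbT.
have := contra (mono a b); lia.
Qed.

Lemma ncomp_relU_submod e g (k : rel T) :
  subrel (connect (undirected g)) (connect (undirected e)) ->
  ncomp e + ncomp (relU g k) <= ncomp g + ncomp (relU e k).
Proof.
pose s := [seq p <- enum {: T * T} | k p.1 p.2].
have sE f : relU f k =2 add_edges f s.
  by move=> u v; rewrite /= mem_filter mem_enum andbT.
by rewrite !(eq_ncomp (sE _)); apply: ncomp_add_edges_submod.
Qed.

End Components.

Lemma ncomp_le_double (T S : finType) (e : rel T) (k : rel S)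
    (h : T -> S) (l : S -> T) (g : T -> T) :
  cancel l h ->
  (forall u v, connect (undirected k) (h u) (h v) ->
     connect (undirected e) u v || connect (undirected e) u (g v)) ->
  ncomp e <= 2 * ncomp k.
Proof.
move=> lK lift; have se := undirected_sym e.
(* A component of [e] is determined by the component of its image under [h]
   and by whether it contains the lift under [l] of that component's root. *)
pose rootk u := fingraph.root (undirected k) (h u).
pose psi u := (rootk u, connect (undirected e) u (l (rootk u))).
have psi_inj : {in fingraph.roots (undirected e) &, injective psi}.
  move=> u1 u2 /eqP r1 /eqP r2 [E1 E2]; set w := l (rootk u1).
  have E2w : connect (undirected e) u1 w = connect (undirected e) u2 w.
    by rewrite /w E2 E1.
  have hw : h w = rootk u1 by rewrite /w lK.
  have c1 : connect (undirected k) (h u1) (h w) by rewrite hw connect_root.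
  have c2 : connect (undirected k) (h u2) (h w) by rewrite hw E1 connect_root.
  rewrite -r1 -r2; apply/(fingraph.rootP se).
  have [u1w | u1Nw] := boolP (connect (undirected e) u1 w).
    by apply: connect_trans (u1w) _; rewrite se -E2w.
  have u2Nw : ~~ connect (undirected e) u2 w by rewrite -E2w.
  move: (lift _ _ c1) (lift _ _ c2); rewrite (negbTE u1Nw) (negbTE u2Nw) /= => u1g u2g.
  by apply: connect_trans u1g _; rewrite se.
rewrite /ncomp /n_comp_mem (eq_card (fun _ => andbT _)) -(card_in_image psi_inj).
rewrite (eq_card (fun _ => andbT _)) mulnC -[2]card_bool -cardX.
apply/subset_leq_card/subsetP => _ /mapP[u _ ->]; rewrite inE /= andbT.
exact/fingraph.roots_root/undirected_sym.
Qed.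

Definition perm_rel (T : finType) (p : {perm T}) : rel T := [rel u v | v == p u].
Arguments perm_rel {T} p _ _ /.
Definition perm2_rel (T : finType) (x y : {perm T}) : rel T :=
  [rel u v | (v == x u) || (v == y u)].
Arguments perm2_rel {T} x y _ _ /.

Section PermutationGraphs.
Variable T : finType.
Implicit Types (p x y z : {perm T}) (e : rel T) (a b u v w : T).

Lemma connect_porbit e p : (forall w, connect e w (p w)) ->
  forall u v, v \in porbit p u -> connect e u v.
Proof.
move=> ep u _ /porbitP[i ->]; elim: i => [|i IH]; first by rewrite expg0 perm1.
by rewrite expgSr permM; apply: connect_trans IH (ep _).
Qed.

Lemma ncomp_perm_rel p : ncomp (perm_rel p) = #|porbits p|.
Proof.
apply: ncomp_card_imset => u v; apply/idP/eqP => [|puv].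
  have porbitS w : porbit p (p w) = porbit p w.
    by have := porbit_perm p 1 w; rewrite expg1.
  have porbit_edge: closed (undirected (perm_rel p)) [pred w | porbit p w == porbit p u].
    by move=> w w' /orP[] /eqP->; rewrite !inE porbitS.
  by move/(closed_connect porbit_edge); rewrite !inE eqxx eq_sym => /esym/eqP.
apply: (connect_porbit (p := p)) => [w | ]; first by rewrite connect_undirected1 //= eqxx.
by rewrite puv porbit_id.
Qed.

Lemma porbitJ p z u : porbit (p ^ z)%g u = [set z w | w in porbit p ((z^-1)%g u)].
Proof.
apply/setP => v; apply/porbitP/imsetP => [[i ->] | [w /porbitP[i ->] ->]].
  by exists ((p ^+ i)%g ((z^-1)%g u)); rewrite ?mem_porbit // -conjXg -permJ permKV.
by exists i; rewrite -conjXg -permJ permKV.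
Qed.

Lemma card_porbitsJ p z : #|porbits (p ^ z)%g| = #|porbits p|.
Proof.
have -> : porbits (p ^ z)%g = [set z @: O | O : {set T} in porbits p].
  apply/setP => O; apply/imsetP/imsetP => [[u _ ->] | [_ /imsetP[w _ ->] ->]].
    by exists (porbit p ((z^-1)%g u)); rewrite ?imset_f ?porbitJ.
  by exists (z w); rewrite // porbitJ permK.
by rewrite card_imset //; apply/imset_inj/perm_inj.
Qed.

Lemma ncomp_perm2_rel1 y : ncomp (perm2_rel 1%g y) = #|porbits y|.
Proof.
rewrite -ncomp_perm_rel; apply: eq_ncomp_sub => u v /=.
  by case/orP=> /eqP->; rewrite ?perm1 ?connect0 // connect_undirected1 /=.
by move=> yuv; rewrite connect_undirected1 //= yuv orbT.
Qed.

Lemma ncomp_perm2_rel_tperm x y a (b := x a) :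
  ncomp (perm2_rel x y) = ncomp (add_edge (perm2_rel (tperm a b * x)%g y) a b).
Proof.
set x' := (tperm a b * x)%g.
have x'a : x' a = x b by rewrite permM tpermL.
have x'b : x' b = b by rewrite permM tpermR.
have x'E u : u != a -> u != b -> x' u = x u.
  by move=> ua ub; rewrite permM tpermD 1?eq_sym.
have Eab : connect (undirected (add_edge (perm2_rel x' y) a b)) a b.
  by apply: connect_undirected1; rewrite /= !eqxx orbT.
apply: eq_ncomp_sub => u v.
  case/orP=> /eqP->; last by apply: connect_undirected1; rewrite /= eqxx orbT.
  case: (eqVneq u a) => [-> | ua]; first exact: Eab.
  case: (eqVneq u b) => [-> | ub].
    apply: connect_trans (_ : connect _ b a) _; first by rewrite undirected_sym.
    by apply: connect_undirected1; rewrite /= -x'a eqxx.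
  by apply: connect_undirected1; rewrite /= x'E ?eqxx.
case/orP=> [/orP[] /eqP-> | /andP[/eqP-> /eqP->]].
- case: (eqVneq u a) => [-> | ua].
    apply: connect_trans (_ : connect _ a b) _.
      by apply: connect_undirected1; rewrite /= eqxx.
    by rewrite x'a; apply: connect_undirected1; rewrite /= eqxx.
  case: (eqVneq u b) => [-> | ub]; first by rewrite x'b.
  by apply: connect_undirected1; rewrite /= x'E ?eqxx.
- by apply: connect_undirected1; rewrite /= eqxx orbT.
- by apply: connect_undirected1; rewrite /= eqxx.
Qed.

Lemma card_porbits_le p : #|porbits p| <= #|T|.
Proof. exact: leq_imset_card. Qed.

(* Downward induction on the number of cycles of x: x = tperm a b * x' with
   b := x a, where x' has one more cycle, x * y differs from x' * y by one
   transposition, and the graph of (x, y) is that of (x', y) plus the edge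
   a - b. *)
Lemma genus_ineq x y :
  #|porbits x| + #|porbits y| + #|porbits (x * y)%g| <= #|T| + 2 * ncomp (perm2_rel x y).
Proof.
have [m] := ubnP (#|T| - #|porbits x|); elim: m x => // m IH x lt_m.
have [a xa | x1] := pickP [pred a | x a != a]; last first.
  have -> : x = 1%g by apply/permP => u; rewrite perm1; apply/eqP/negbFE/x1.
  by rewrite mul1g ncomp_perm2_rel1; have := card_porbits_le 1; lia.
set b := x a; set t := tperm a b; set x' : {perm T} := (t * x)%g.
have ab : a != b by rewrite eq_sym.
have card_x' : #|porbits x'| = #|porbits x| + 1.
  have a_orb : a \in porbit x b.
    by rewrite porbit_sym; have := mem_porbit x 1 a; rewrite expg1.
  by have := porbits_mul_tperm x a b; rewrite ab a_orb /= addn0.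
have card_xy : #|porbits (x * y)%g| + (a \notin porbit (x' * y)%g b).*2 =
               #|porbits (x' * y)%g| + 1.
  have -> : (x * y = t * (x' * y))%g by rewrite !mulgA tperm2 mul1g.
  by have := porbits_mul_tperm (x' * y)%g a b; rewrite ab.
have ncomp_x := ncomp_add_edge (perm2_rel x' y) a b.
rewrite -ncomp_perm2_rel_tperm in ncomp_x.
have orbit_conn :
    a \in porbit (x' * y)%g b -> connect (undirected (perm2_rel x' y)) a b.
  rewrite undirected_sym; apply: connect_porbit => w.
  apply: (connect_trans (y := x' w)); apply: connect_undirected1;
    by rewrite /= ?permM eqxx ?orbT.
have le_dc :
    ~~ connect (undirected (perm2_rel x' y)) a b <= (a \notin porbit (x' * y)%g b).
  by case: (a \in porbit _ b) orbit_conn => [->|] //; rewrite leq_b1.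
move: (IH x') (card_porbits_le x') card_x' card_xy ncomp_x le_dc lt_m.
(* Name the cardinals so that [lia] sees convertible copies as one atom. *)
set nT := #|T|; set nx := #|porbits x|; set nx' := #|porbits x'|.
set nxy := #|porbits (x * y)%g|; set nx'y := #|porbits (x' * y)%g|.
lia.
Qed.

End PermutationGraphs.

Section DoubleCover.
Variable r : nat.
Local Notation X := (T2 r).
Local Notation gam := (gamma r).
Local Notation tp := Defs.tperm2.
Implicit Types (p : {perm 'I_r}) (q z : {perm X}) (e : 'I_r -> bool) (u w : X).

Definition proj u : 'I_r := match u with inl i => i | inr i => i end.

Definition dperm_fun p u : X :=
  match u with inl i => inl (p i) | inr i => inr ((p^-1)%g i) end.
Lemma dperm_inj p : injective (dperm_fun p).
Proof. by case=> i; case=> j //= [] /perm_inj ->. Qed.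
Definition dperm p : {perm X} := perm (@dperm_inj p).

Lemma dpermE p u : dperm p u = dperm_fun p u. Proof. exact: permE. Qed.
Lemma gammaE u : gam u = gamma_fun u. Proof. exact: permE. Qed.
Lemma tpE p u : tp p u = t_fun p u. Proof. exact: permE. Qed.
Lemma tauE e u : tau e u = tau_fun e u. Proof. exact: permE. Qed.

Lemma tpV p : tp (p^-1)%g = (tp p)^-1%g.
Proof.
apply/esym/eqP; rewrite eq_invg_mul; apply/eqP/permP => u.
by rewrite permM !tpE perm1; case: u => i //=; rewrite permK.
Qed.

Lemma dpermV p : ((dperm p)^-1 = dperm p^-1)%g.
Proof.
apply/eqP; rewrite eq_invg_mul; apply/eqP/permP => u.
by rewrite permM !dpermE perm1; case: u => i /=; rewrite ?invgK ?permK ?permKV.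
Qed.

Lemma dperm_gamma p : dperm p = (gam ^ tp p * gam)%g.
Proof.
apply/permP => u; rewrite conjgE -tpV !permM dpermE !tpE !gammaE.
by case: u => i //=; rewrite invgK.
Qed.

Lemma dpermV_gamma p : dperm (p^-1)%g = (gam * gam ^ tp p)%g.
Proof.
apply/permP => u; rewrite conjgE -tpV !permM dpermE !tpE !gammaE.
by case: u => i //=; rewrite invgK.
Qed.

Lemma gammaK : (gam * gam = 1)%g.
Proof. by apply/permP => u; rewrite permM !gammaE perm1; case: u. Qed.

Lemma gammaJ_tau e : (gam ^ tau e = gam)%g.
Proof.
have tauK : involutive (tau e).
  by move=> u; rewrite !tauE; case: u => i /=; case E: (e i); rewrite /= ?E.
apply/permP => u; rewrite conjgE !permM !gammaE.
have -> : (tau e)^-1%g u = tau e u by rewrite -{1}(tauK u) permK.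
by rewrite !tauE; case: u => i /=; case E: (e i); rewrite /= ?E.
Qed.

Lemma gammaJ_Hr h : h \in Hr r -> (gam ^ h = gam)%g.
Proof. by rewrite inE /Defs.pcomp => /eqP gh; rewrite conjgE gh mulKg. Qed.

(* Since h centralizes gamma, the coset identity conjugates gamma by
   t_b tau_e and by t_s tau_e' t_a to the same permutation. *)
Lemma dperm_coset (a b s : {perm 'I_r}) e e' h :
  h \in Hr r ->
  Defs.pcomp (tp a^-1) (Defs.pcomp (tau e) (tp b)) =
    Defs.pcomp (Defs.pcomp (tau e') (tp s)) h ->
  (dperm a * (dperm b^-1) ^ tau e = (dperm s^-1) ^ (tau e' * tp a))%g.
Proof.
rewrite /Defs.pcomp => hH coset.
have {}coset : (tp b * tau e = h * (tp s * tau e') * tp a)%g.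
  by rewrite -coset tpV mulgKV.
have gamJ : (gam ^ (tp b * tau e) = gam ^ (tp s * (tau e' * tp a)))%g.
  by rewrite coset !conjgM gammaJ_Hr.
rewrite !dpermV_gamma dperm_gamma conjMg gammaJ_tau.
rewrite mulgA -(mulgA _ gam gam) gammaK mulg1.
rewrite -conjgM gamJ conjMg [(gam ^ (tau e' * _))%g]conjgM gammaJ_tau.
by rewrite -conjgM.
Qed.

Lemma porbit_dperm_inl p i :
  porbit (dperm p) (inl i) = [set inl j | j in porbit p i] :> {set X}.
Proof.
have dpermX n : ((dperm p) ^+ n)%g (inl i) = inl ((p ^+ n)%g i).
  by elim: n => [|n IH]; rewrite ?expg0 ?perm1 // !expgSr !permM IH dpermE.
apply/setP => v; apply/porbitP/imsetP => [[n ->] | [j /porbitP[n ->] ->]].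
  by exists ((p ^+ n)%g i); rewrite ?mem_porbit ?dpermX.
by exists n; rewrite dpermX.
Qed.

Lemma porbit_dperm_inr p i :
  porbit (dperm p) (inr i) = [set inr j | j in porbit p i] :> {set X}.
Proof.
have dpermX n : ((dperm p) ^+ n)%g (inr i) = inr (((p^-1) ^+ n)%g i).
  by elim: n => [|n IH]; rewrite ?expg0 ?perm1 // !expgSr !permM IH dpermE.
rewrite -[porbit p i]porbitV.
apply/setP => v; apply/porbitP/imsetP => [[n ->] | [j /porbitP[n ->] ->]].
  by exists (((p^-1) ^+ n)%g i); rewrite ?mem_porbit ?dpermX.
by exists n; rewrite dpermX.
Qed.

Lemma card_porbits_dperm p : #|porbits (dperm p)| = 2 * #|porbits p|.
Proof.
pose L := [set [set (inl j : X) | j in O] | O : {set 'I_r} in porbits p].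
pose R := [set [set (inr j : X) | j in O] | O : {set 'I_r} in porbits p].
have -> : porbits (dperm p) = L :|: R.
  apply/setP => O; rewrite inE; apply/imsetP/orP => [[[i|i] _ ->] | ].
  - by left; rewrite porbit_dperm_inl imset_f ?imset_f.
  - by right; rewrite porbit_dperm_inr imset_f ?imset_f.
  case=> /imsetP[_ /imsetP[i _ ->] ->];
    by [exists (inl i); rewrite ?porbit_dperm_inl
       | exists (inr i); rewrite ?porbit_dperm_inr].
have disjLR : L :&: R = set0.
  apply/setP => O; rewrite !inE; apply/negP => /andP[].
  move=> /imsetP[_ /imsetP[i _ ->] ->] /imsetP[_ /imsetP[j _ ->]] /setP/(_ (inl i)).
  by rewrite imset_f ?porbit_id // => /esym/imsetP[].
have injL : injective (fun O : {set 'I_r} => [set (inl j : X) | j in O]).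
  by apply: imset_inj => i j [].
have injR : injective (fun O : {set 'I_r} => [set (inr j : X) | j in O]).
  by apply: imset_inj => i j [].
rewrite cardsU disjLR cards0 subn0 (card_imset _ injL) (card_imset _ injR).
by rewrite addnn mul2n.
Qed.

Definition covers q p := forall w,
  proj (q w) = p (proj w) /\ proj ((q^-1)%g w) = (p^-1)%g (proj w) \/
  proj (q w) = (p^-1)%g (proj w) /\ proj ((q^-1)%g w) = p (proj w).

Lemma coversV q p : covers q p -> covers q (p^-1)%g.
Proof. by move=> qp w; rewrite invgK; case: (qp w); [right | left]. Qed.

Lemma covers_dperm p : covers (dperm p) p.
Proof.
by move=> w; rewrite dpermV !dpermE; case: w => i /=; [left | right]; rewrite ?invgK.
Qed.

Lemma covers_conj q p z :
  (forall w, proj (z w) = proj w) -> covers q p -> covers (q ^ z)%g p.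
Proof.
move=> projz qp w; rewrite -conjVg !conjgE !permM !projz.
have projzV : proj ((z^-1)%g w) = proj w by rewrite -{2}(permKV z w) projz.
by rewrite -projzV; apply: qp.
Qed.

Lemma proj_tau e w : proj (tau e w) = proj w.
Proof. by rewrite tauE; case: w => i /=; case: (e i). Qed.

Lemma covers_dpermV_tau p e : covers ((dperm p^-1) ^ tau e)%g p.
Proof.
rewrite -[p in covers _ p]invgK.
by apply/coversV/covers_conj/covers_dperm => w; apply: proj_tau.
Qed.

Section Lifting.
Variables (x y : {perm X}) (a b : {perm 'I_r}).
Hypotheses (xa : covers x a) (yb : covers y b).

Lemma lift_edge w j : undirected (perm2_rel a b) (proj w) j ->
  exists2 w', proj w' = j & connect (undirected (perm2_rel x y)) w w'.
Proof.
have step q (E : rel X) : (forall u, E u (q u)) ->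
    forall u, connect (undirected E) u (q u) &&
              connect (undirected E) u ((q^-1)%g u).
  move=> Eq u; rewrite (connect_undirected1 (Eq u)) undirected_sym.
  by have := connect_undirected1 (Eq ((q^-1)%g u)); rewrite permKV.
have lift q p : covers q p -> (forall u, perm2_rel x y u (q u)) ->
    j = p (proj w) \/ j = (p^-1)%g (proj w) ->
    exists2 w', proj w' = j & connect (undirected (perm2_rel x y)) w w'.
  move=> qp Eq; have /andP[wq wqV] := step q _ Eq w.
  case: (qp w) => -[qw qVw] [] ->;
    by [exists (q w) | exists ((q^-1)%g w) | exists ((q^-1)%g w) | exists (q w)].
have Ex u : perm2_rel x y u (x u) by rewrite /= eqxx.
have Ey u : perm2_rel x y u (y u) by rewrite /= eqxx orbT.
move=> /= /orP[] /orP[] /eqP jE.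
- exact: lift xa Ex (or_introl jE).
- exact: lift yb Ey (or_introl jE).
- by apply: lift xa Ex _; right; rewrite jE permK.
- by apply: lift yb Ey _; right; rewrite jE permK.
Qed.

Lemma connect_proj u v : connect (undirected (perm2_rel a b)) (proj u) (proj v) ->
  connect (undirected (perm2_rel x y)) u v ||
  connect (undirected (perm2_rel x y)) u (gam v).
Proof.
pose P := [pred j | [exists w, (proj w == j) &&
                                connect (undirected (perm2_rel x y)) u w]].
have closedP : closed (undirected (perm2_rel a b)) P.
  apply: intro_closed; first exact: undirected_sym.
  move=> i j ij /existsP[w /andP[/eqP wi uw]]; rewrite -wi in ij.
  have [w' <- ww'] := lift_edge ij.
  by apply/existsP; exists w'; rewrite eqxx (connect_trans uw ww').
have uP : proj u \in P by apply/existsP; exists u; rewrite eqxx connect0.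
move/(closed_connect closedP); rewrite uP => /esym/existsP[w /andP[/eqP wv uw]].
rewrite gammaE.
by case: w wv uw => i; case: v => j /= -> ->; rewrite ?orbT.
Qed.

Lemma ncomp_cover_le : ncomp (perm2_rel x y) <= 2 * ncomp (perm2_rel a b).
Proof. exact: (ncomp_le_double (l := inl) _ connect_proj). Qed.

Lemma connect_proj_mul w :
  connect (undirected (perm2_rel a b)) (proj w) (proj ((x * y)%g w)).
Proof.
have edge q p (E : rel 'I_r) u : covers q p ->
    (forall i, E i (p i)) -> connect (undirected E) (proj u) (proj (q u)).
  move=> qp Ep; apply: connect1 => /=.
  case: (qp u) => -[-> _]; first by rewrite Ep.
  by have := Ep ((p^-1)%g (proj u)); rewrite permKV => ->; rewrite orbT.
rewrite permM; apply: connect_trans (edge _ _ _ _ xa _) (edge _ _ _ _ yb _) => i;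
  by rewrite /= eqxx ?orbT.
Qed.

End Lifting.

Lemma is_sigma_dperm a b e s : is_sigma a b e s ->
  exists e', (dperm a * (dperm b^-1) ^ tau e = (dperm s^-1) ^ (tau e' * tp a))%g.
Proof. by case=> e' [_ [h hH coset]]; exists e'; apply: dperm_coset hH coset. Qed.

Lemma sigma_genus_bound a b e s : is_sigma a b e s ->
  #|porbits a| + #|porbits b| + #|porbits s| <= r + 2 * ncomp (perm2_rel a b).
Proof.
case/is_sigma_dperm => e' xyE.
have := genus_ineq (dperm a) ((dperm b^-1) ^ tau e)%g.
rewrite xyE !card_porbitsJ !card_porbits_dperm !porbitsV card_sum card_ord.
have := ncomp_cover_le (covers_dperm a) (covers_dpermV_tau b e).
lia.
Qed.

Lemma connect_sigma a b e s : is_sigma a b e s ->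
  forall i, connect (undirected (perm2_rel a b)) i (s i).
Proof.
case/is_sigma_dperm => e' xyE.
set Z := (tau e' * tp a)%g.
have projZ j : connect (undirected (perm2_rel a b)) j (proj (Z (inl j))).
  rewrite permM tauE tpE /=; case: (e' j) => /=; last exact: connect0.
  by apply: connect_undirected1; rewrite /= eqxx.
have sV i : connect (undirected (perm2_rel a b)) i ((s^-1)%g i).
  apply: connect_trans (projZ i) _.
  apply: connect_trans (connect_proj_mul (covers_dperm a) (covers_dpermV_tau b e) _) _.
  by rewrite xyE permJ dpermE undirected_sym; apply: projZ.
by move=> i; rewrite undirected_sym; have := sV (s i); rewrite permK.
Qed.

Lemma ncomp_sigma_relU a b e s : is_sigma a b e s ->
  ncomp (relU (perm_rel s) (perm2_rel a b)) = ncomp (perm2_rel a b).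
Proof.
move=> hsigma; apply: eq_ncomp_sub => i j.
  case/orP => [/eqP-> | ij]; first exact: connect_sigma hsigma _.
  exact: connect_undirected1.
by move=> ij; apply: connect_undirected1; apply/orP; right.
Qed.

End DoubleCover.

Definition block_rel (T : finType) (A : {set {set T}}) : rel T :=
  [rel u v | pblock A u == pblock A v].
Arguments block_rel {T} A _ _ /.

Section Partitions.
Variable T : finType.
Implicit Types (A : {set {set T}}) (u v : T).

Lemma connect_block_rel A u v :
  connect (undirected (block_rel A)) u v = (pblock A u == pblock A v).
Proof.
apply/idP/idP => [|uv]; last exact: connect_undirected1.
have closedA : closed (undirected (block_rel A)) [pred w | pblock A w == pblock A u].
  by move=> x y /orP[] /eqP xy; rewrite !inE xy.
by move/(closed_connect closedA); rewrite !inE eqxx eq_sym => <-.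
Qed.

Lemma ncomp_block_rel A : partition A [set: T] -> ncomp (block_rel A) = #|A|.
Proof.
move=> pA; rewrite (ncomp_card_imset (F := pblock A)); last exact: connect_block_rel.
suff -> : pblock A @: T = A by [].
apply/setP => B; apply/imsetP/idP => [[u _ ->] | BA].
  by apply: pblock_mem; rewrite (cover_partition pA) inE.
have /set0Pn[u uB] := partition_neq0 pA BA.
by exists u; rewrite // (def_pblock (partition_trivIset pA) BA uB).
Qed.

Lemma pblock_porbits (p : {perm T}) u : pblock (porbits p) u = porbit p u.
Proof.
rewrite /pblock; case: pickP => [B /andP[/imsetP[w _ ->] uw] | ].
  by apply/eqP; rewrite eq_porbit_mem porbit_sym.
by move/(_ (porbit p u)); rewrite /= imset_f // porbit_id.
Qed.

Lemma connect_porbits_block (p : {perm T}) (e : rel T) :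
  (forall u, e u (p u)) -> subrel (block_rel (porbits p)) (connect (undirected e)).
Proof.
move=> ep u v; rewrite /= !pblock_porbits eq_porbit_mem porbit_sym.
by apply: connect_porbit => w; apply: connect_undirected1.
Qed.

End Partitions.

Lemma pblock_refines_porbits r (p : {perm 'I_r}) (A : {set {set 'I_r}}) u :
  partition A [set: 'I_r] -> refines (porbits p) A -> pblock A (p u) = pblock A u.
Proof.
move=> pA /forall_inP refA.
have /refA/exists_inP[B BA sB] : porbit p u \in porbits p by apply: imset_f.
have uB : u \in B by apply: (subsetP sB); apply: porbit_id.
have puB : p u \in B by apply: (subsetP sB); have := mem_porbit p 1 u; rewrite expg1.
by rewrite !(def_pblock (partition_trivIset pA) BA).
Qed.

Lemma pblock_pjoin r (A B : {set {set 'I_r}}) u v :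
  (pblock (pjoin A B) u == pblock (pjoin A B) v) =
  connect (relU (block_rel A) (block_rel B)) u v.
Proof.
set AB := relU (block_rel A) (block_rel B).
have symAB : connect_sym AB.
  by apply: sym_connect_sym => x y; rewrite /= ![pblock _ y == _]eq_sym.
have eqv : {in [set: 'I_r] & &, equivalence_rel (connect AB)}.
  move=> x y z _ _ _; split=> [|xy]; first exact: connect0.
  by apply/idP/idP; apply: connect_trans; rewrite // symAB.
have blockE w : pblock (pjoin A B) w = [set z in [set: 'I_r] | connect AB w z].
  apply: def_pblock; first exact: partition_trivIset (equivalence_partitionP eqv).
    by apply: imset_f; rewrite inE.
  by rewrite !inE connect0.
rewrite !blockE; apply/eqP/idP => [/setP/(_ v) | uv].
  by rewrite !inE connect0.
apply/setP => z; rewrite !inE; apply/idP/idP => [uz | vz].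
  by apply: connect_trans uz; rewrite symAB.
exact: connect_trans uv vz.
Qed.

Lemma ncomp_pjoin_one r (A : {set {set 'I_r}}) (a b : {perm 'I_r}) : 0 < r ->
  pjoin (pjoin A (zero_part a)) (zero_part b) = one_part r ->
  ncomp (relU (block_rel A) (perm2_rel a b)) = 1.
Proof.
move=> r_gt0 joinE; apply: ncomp_eq1; last by rewrite card_ord.
have edge_a w : relU (block_rel A) (perm2_rel a b) w (a w) by rewrite /= eqxx orbT.
have edge_b w : relU (block_rel A) (perm2_rel a b) w (b w) by rewrite /= eqxx !orbT.
move=> u v; have := pblock_pjoin (pjoin A (zero_part a)) (zero_part b) u v.
rewrite joinE /one_part !(def_pblock (trivIset1 _) (set11 _) (in_setT _)) eqxx => /esym.
apply: connect_sub => x y /orP[]; last exact: connect_porbits_block.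
rewrite /= pblock_pjoin; apply: connect_sub => x' y' /orP[xy | ]; last first.
  exact: connect_porbits_block.
by apply: connect_undirected1; apply/orP; left.
Qed.

Theorem proposition4p4 (r : nat) (hr : (3 <= r)%N)
  (alpha beta : {perm 'I_r}) (eps : 'I_r -> bool) (sigma : {perm 'I_r})
  (hsigma : is_sigma alpha beta eps sigma)
  (A : {set {set 'I_r}}) (hA : is_setpart A)
  (hsA : refines (zero_part sigma) A)
  (hjoin : pjoin (pjoin A (zero_part alpha)) (zero_part beta) = one_part r) :
  (- (2 * r)%:Z - #|zero_part sigma|%:Z + 2 * #|A|%:Z
     + #|zero_part alpha|%:Z + #|zero_part beta|%:Z + 1 <= 0)%R.
Proof.
have genus := sigma_genus_bound hsigma.
have sigma_in_A :
    subrel (connect (undirected (perm_rel sigma))) (connect (undirected (block_rel A))).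
  apply: connect_undirected_sub => u _ /eqP->; apply: connect_undirected1.
  by rewrite /= (pblock_refines_porbits _ hA hsA).
have r_gt0 : 0 < r by lia.
have := ncomp_relU_submod (perm2_rel alpha beta) sigma_in_A.
rewrite ncomp_perm_rel ncomp_block_rel // ncomp_pjoin_one //.
rewrite (ncomp_sigma_relU hsigma) /zero_part.
set nA := #|A|; set na := #|porbits alpha|; set nb := #|porbits beta|.
set ns := #|porbits sigma|; set nK := ncomp (perm2_rel alpha beta).
lia.
Qed.
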